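(* Let $a,b\in\mathbb{B}^2\setminus\{0\}$ be distinct points with $|a|\neq|b|$ lying on a circle orthogonal to the unit circle. Put $\alpha=a(1-|b|^2)+b(1-|a|^2)$ and \[ \mathrm{cen}=\frac{\alpha}{2-a\overline{b}-\overline{a}b},\qquad p=\frac{\alpha}{2-|a|^2-|b|^2},\qquad m_{ab}=\frac{\alpha}{1-|a|^2|b|^2+\sqrt{(1-|a|^2)(1-|b|^2)}\,|1-\overline{a}b|}. \] Then $m_{ab}$ is the hyperbolic midpoint of the segment $[\mathrm{cen},p]$, i.e. $\rho_{\mathbb{B}^2}(\mathrm{cen},m_{ab})=\rho_{\mathbb{B}^2}(m_{ab},p)$. Moreover, $B^2(\mathrm{cen},|\mathrm{cen}-a|)=B_\rho\bigl(m_{ab},\rho_{\mathbb{B}^2}(a,b)/2\bigr)$.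
   Context: $\mathbb{B}^2$ is the unit disk in $\mathbb{C}$. The hyperbolic metric is given by $\mathrm{sh}\frac{\rho_{\mathbb{B}^2}(x,y)}{2}=\frac{|x-y|}{\sqrt{(1-|x|^2)(1-|y|^2)}}$ for $x,y\in\mathbb{B}^2$. $B^2(x,r)$ is the Euclidean disk with center $x$ and radius $r$, and $B_\rho(x,M)=\{y\in\mathbb{B}^2:\rho_{\mathbb{B}^2}(x,y)<M\}$ is the hyperbolic disk. (The point $m_{ab}$ is the hyperbolic midpoint of $a$ and $b$; $\mathrm{cen}$ is the intersection of the tangent lines at $a$ and $b$ to the hyperbolic geodesic circle through $a,b$; $p$ is the intersection of the line through $0$ and $\mathrm{cen}$ with the segment $[a,b]$.) *)

From Stdlib Require Export Reals.
From Coquelicot Require Export Coquelicot.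
Open Scope R_scope.

Definition in_disk (x : C) : Prop := Cmod x < 1.

Definition rho (x y : C) : R :=
  2 * arcsinh (Cmod (x - y)%C / sqrt ((1 - Cmod x ^ 2) * (1 - Cmod y ^ 2))).

(* a and b lie on a (genuine) circle orthogonal to the unit circle:
   a circle with center c and radius r > 0 such that |c|^2 = 1 + r^2. *)
Definition on_orthogonal_circle (a b : C) : Prop :=
  exists (c : C) (r : R), 0 < r /\ Cmod (a - c)%C = r /\ Cmod (b - c)%C = r
                          /\ Cmod c ^ 2 = 1 + r ^ 2.

Definition alpha_ab (a b : C) : C :=
  (a * RtoC (1 - Cmod b ^ 2) + b * RtoC (1 - Cmod a ^ 2))%C.

Definition cen (a b : C) : C :=
  (alpha_ab a b / (RtoC 2 - a * Cconj b - Cconj a * b))%C.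

Definition pt_p (a b : C) : C :=
  (alpha_ab a b / RtoC (2 - Cmod a ^ 2 - Cmod b ^ 2))%C.

Definition m_ab (a b : C) : C :=
  (alpha_ab a b /
   RtoC (1 - Cmod a ^ 2 * Cmod b ^ 2
         + sqrt ((1 - Cmod a ^ 2) * (1 - Cmod b ^ 2)) * Cmod (1 - Cconj a * b)%C))%C.

From Stdlib Require Import Lra Psatz.
Open Scope R_scope.

(* With A = |a|^2, B = |b|^2, s = sqrt((1-A)(1-B)), t = |1 - conj(a) b| and
   u = 1 - AB, one has |alpha|^2 = u^2 - s^2 t^2, and cen, m_ab, p are the
   points alpha/(u+t^2), alpha/(u+st), alpha/(u+s^2) of a single ray.  Between
   two points alpha/r, alpha/r' of that ray sh^2(rho/2) equals
   |alpha|^2 (r-r')^2 / ((r^2-|alpha|^2)(r'^2-|alpha|^2)); as r^2-|alpha|^2 is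
   t^2 (2u+s^2+t^2) at cen and s^2 (2u+s^2+t^2) at p, and the radii differ by
   t(t-s) and s(t-s), both half-distances to m_ab agree.
   For the discs, cosh rho = 1 + 2 sh^2(rho/2) and cosh(rho(a,b)/2) = t/s turn
   rho(m_ab,z) < rho(a,b)/2 into |m_ab - z|^2 < k (1 - |z|^2) with
   k = t(t-s)/(u+st), and |m_ab - z|^2 - k (1 - |z|^2) is the positive multiple
   (u+t^2)/(u+st) of |z - cen|^2 - |cen - a|^2. *)

Lemma lt_iff_pow2_lt x y : 0 <= x -> 0 <= y -> (x < y <-> x ^ 2 < y ^ 2).
Proof. intros Hx Hy; split; intros H; nra. Qed.

Lemma Cmod_sqr (z : C) : Cmod z ^ 2 = Re z ^ 2 + Im z ^ 2.
Proof. unfold Cmod. rewrite pow2_sqrt; [reflexivity | nra]. Qed.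

Lemma in_disk_iff (z : C) : in_disk z <-> Cmod z ^ 2 < 1.
Proof.
  unfold in_disk. rewrite <- (pow1 2) at 2.
  apply lt_iff_pow2_lt; [apply Cmod_ge_0 | lra].
Qed.

Ltac expand_components :=
  repeat match goal with z : C |- _ => destruct z end;
  rewrite ?Cmod_sqr; simpl; ring.

Lemma Cmod_scal_sqr (c : R) (x : C) : Cmod (RtoC c * x) ^ 2 = c ^ 2 * Cmod x ^ 2.
Proof. expand_components. Qed.

Lemma Cmod_scal_sub_sqr (c : R) (x z : C) :
  Cmod (RtoC c * x - z) ^ 2 = c ^ 2 * Cmod x ^ 2 - 2 * c * Re (x * Cconj z) + Cmod z ^ 2.
Proof. expand_components. Qed.

Lemma Cmod_sub_scal_sqr (c : R) (x z : C) :
  Cmod (z - RtoC c * x) ^ 2 = c ^ 2 * Cmod x ^ 2 - 2 * c * Re (x * Cconj z) + Cmod z ^ 2.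
Proof. expand_components. Qed.

Lemma Cmod_scal_sub_scal_sqr (c1 c2 : R) (x : C) :
  Cmod (RtoC c1 * x - RtoC c2 * x) ^ 2 = (c1 - c2) ^ 2 * Cmod x ^ 2.
Proof. expand_components. Qed.

Lemma Cdiv_RtoC (z : C) (r : R) : r <> 0 -> (z / RtoC r)%C = (RtoC (/ r) * z)%C.
Proof.
  intros Hr. destruct z as [x y].
  unfold Cdiv, Cinv, Cmult, RtoC; simpl. f_equal; field; exact Hr.
Qed.

Lemma Cmod_sub_sqr (a b : C) :
  Cmod (a - b) ^ 2 = Cmod a ^ 2 - 2 * Re (a * Cconj b) + Cmod b ^ 2.
Proof. expand_components. Qed.

Lemma Cmod_one_sub_conj_mul_sqr (a b : C) :
  Cmod (1 - Cconj a * b) ^ 2 = 1 - 2 * Re (a * Cconj b) + Cmod a ^ 2 * Cmod b ^ 2.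
Proof. expand_components. Qed.

Lemma two_sub_conj_cross (a b : C) :
  (RtoC 2 - a * Cconj b - Cconj a * b)%C = RtoC (2 - 2 * Re (a * Cconj b)).
Proof. destruct a, b; unfold Cminus, Cplus, Copp, Cmult, Cconj, RtoC; simpl; f_equal; ring. Qed.

Lemma Cmod_alpha_sqr (a b : C) :
  Cmod (alpha_ab a b) ^ 2 =
  (1 - Cmod a ^ 2 * Cmod b ^ 2) ^ 2
  - (1 - Cmod a ^ 2) * (1 - Cmod b ^ 2)
    * (1 - 2 * Re (a * Cconj b) + Cmod a ^ 2 * Cmod b ^ 2).
Proof. unfold alpha_ab. expand_components. Qed.

Lemma Cmod_alpha_sub_sqr (a b : C) :
  Cmod (alpha_ab a b - RtoC (2 - 2 * Re (a * Cconj b)) * a) ^ 2 =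
  (1 - 2 * Re (a * Cconj b) + Cmod a ^ 2 * Cmod b ^ 2)
  * (Cmod a ^ 2 - 2 * Re (a * Cconj b) + Cmod b ^ 2).
Proof. unfold alpha_ab. expand_components. Qed.

Definition sinh2_half_rho (x y : C) : R :=
  Cmod (x - y) ^ 2 / ((1 - Cmod x ^ 2) * (1 - Cmod y ^ 2)).

(* No hypothesis on V: for V <= 0 both sides are 0, since sqrt and / return 0
   there. *)
Lemma sqrt_div_sqrt U V : 0 <= U -> sqrt U / sqrt V = sqrt (U / V).
Proof.
  intros HU. destruct (Rlt_or_le 0 V) as [HV | HV].
  - symmetry. apply sqrt_div; assumption.
  - rewrite (sqrt_neg_0 V HV), Rdiv_0_r. symmetry. apply sqrt_neg_0.
    destruct (Req_dec V 0) as [-> | HV0].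
    + rewrite Rdiv_0_r. lra.
    + unfold Rdiv. assert (/ V < 0) by (apply Rinv_lt_0_compat; lra). nra.
Qed.

Lemma rho_sinh2_half x y : rho x y = 2 * arcsinh (sqrt (sinh2_half_rho x y)).
Proof.
  unfold rho, sinh2_half_rho.
  rewrite <- sqrt_div_sqrt by apply pow2_ge_0.
  rewrite sqrt_pow2 by apply Cmod_ge_0. reflexivity.
Qed.

Lemma sinh2_half_rho_ge0 x y : in_disk x -> in_disk y -> 0 <= sinh2_half_rho x y.
Proof.
  rewrite !in_disk_iff. intros Hx Hy. unfold sinh2_half_rho.
  apply Rdiv_le_0_compat; [apply pow2_ge_0 | nra].
Qed.

Lemma sinh_double v : sinh (2 * v) = 2 * sinh v * cosh v.
Proof.
  unfold sinh, cosh. replace (- (2 * v)) with (- v + - v) by ring.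
  replace (2 * v) with (v + v) by ring. rewrite !exp_plus. field.
Qed.

Lemma cosh_sqrt v : cosh v = sqrt (1 + sinh v ^ 2).
Proof.
  assert (Hinv : exp v * exp (- v) = 1)
    by (rewrite <- exp_plus, Rplus_opp_r; apply exp_0).
  assert (Hpos : 0 < cosh v)
    by (unfold cosh; pose proof (exp_pos v); pose proof (exp_pos (- v)); lra).
  rewrite <- (sqrt_pow2 (cosh v)) by lra. f_equal.
  unfold sinh, cosh. nra.
Qed.

Lemma sinh_double_arcsinh X : sinh (2 * arcsinh X) = 2 * X * sqrt (1 + X ^ 2).
Proof. rewrite sinh_double, cosh_sqrt, sinh_arcsinh. reflexivity. Qed.

Lemma arcsinh_double_lt_iff X Y : 0 <= X -> 0 <= Y ->
  (2 * arcsinh X < arcsinh Y <-> 1 + 2 * X ^ 2 < sqrt (1 + Y ^ 2)).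
Proof.
  intros HX HY.
  assert (Hsinh : 2 * arcsinh X < arcsinh Y <-> sinh (2 * arcsinh X) < Y).
  { split; intros H.
    - rewrite <- (sinh_arcsinh Y). apply sinh_lt, H.
    - rewrite <- (arcsinh_sinh (2 * arcsinh X)). apply arcsinh_lt, H. }
  assert (Hsq : forall w, 0 <= w -> sqrt w ^ 2 = w) by (intros; apply pow2_sqrt; assumption).
  rewrite Hsinh, sinh_double_arcsinh.
  rewrite lt_iff_pow2_lt by (try apply sqrt_pos; pose proof (sqrt_pos (1 + X ^ 2)); nra).
  rewrite (lt_iff_pow2_lt (1 + 2 * X ^ 2)) by (try apply sqrt_pos; nra).
  rewrite Rpow_mult_distr, !Hsq by nra. split; intros; nra.
Qed.

Lemma rho_lt_half_rho_iff x z y w :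
  in_disk x -> in_disk z -> in_disk y -> in_disk w ->
  (rho x z < rho y w / 2 <->
   1 + 2 * sinh2_half_rho x z < sqrt (1 + sinh2_half_rho y w)).
Proof.
  intros Hx Hz Hy Hw.
  pose proof (sinh2_half_rho_ge0 x z Hx Hz) as Hxz.
  pose proof (sinh2_half_rho_ge0 y w Hy Hw) as Hyw.
  rewrite !rho_sinh2_half.
  replace (2 * arcsinh (sqrt (sinh2_half_rho y w)) / 2)
    with (arcsinh (sqrt (sinh2_half_rho y w))) by field.
  rewrite arcsinh_double_lt_iff by apply sqrt_pos.
  rewrite !pow2_sqrt by assumption. reflexivity.
Qed.

Lemma one_add_twice_div_lt_iff U w s t : 0 < w -> 0 < s ->
  (1 + 2 * (U / w) < t / s <-> 2 * s * U < (t - s) * w).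
Proof.
  intros Hw Hs.
  assert (HU : U = U / w * w) by (field; lra).
  assert (Ht : t = t / s * s) by (field; lra).
  assert (Hsw : 0 < s * w) by nra.
  set (q := U / w) in *. set (r := t / s) in *.
  rewrite HU, Ht. split; intros; nra.
Qed.

Section Configuration.

Variables a b : C.
Hypotheses (Ha : in_disk a) (Hb : in_disk b) (Hab : a <> b).

Let s := sqrt ((1 - Cmod a ^ 2) * (1 - Cmod b ^ 2)).
Let t := Cmod (1 - Cconj a * b).
Let u := 1 - Cmod a ^ 2 * Cmod b ^ 2.
Let alpha := alpha_ab a b.

Let a_sqr_lt1 : Cmod a ^ 2 < 1. Proof. apply in_disk_iff, Ha. Qed.
Let b_sqr_lt1 : Cmod b ^ 2 < 1. Proof. apply in_disk_iff, Hb. Qed.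

Lemma s_sqr : s ^ 2 = (1 - Cmod a ^ 2) * (1 - Cmod b ^ 2).
Proof. apply pow2_sqrt. nra. Qed.

Lemma t_sqr_sub_s_sqr : t ^ 2 - s ^ 2 = Cmod (a - b) ^ 2.
Proof. unfold t. rewrite s_sqr, Cmod_one_sub_conj_mul_sqr, Cmod_sub_sqr. ring. Qed.

Lemma s_pos : 0 < s.
Proof. apply sqrt_lt_R0. nra. Qed.

Lemma s_lt_t : s < t.
Proof.
  assert (Hd : 0 < Cmod (a - b)).
  { apply Cmod_gt_0. intros E. apply Hab. rewrite <- (Cplus_0_r b), <- E. ring. }
  pose proof t_sqr_sub_s_sqr. pose proof s_pos.
  assert (0 <= t) by apply Cmod_ge_0. nra.
Qed.

Lemma u_pos : 0 < u.
Proof. unfold u. pose proof (pow2_ge_0 (Cmod a)). nra. Qed.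

Lemma Cmod_alpha_sqr_st : Cmod alpha ^ 2 = u ^ 2 - s ^ 2 * t ^ 2.
Proof. unfold alpha, t. rewrite Cmod_alpha_sqr, s_sqr, Cmod_one_sub_conj_mul_sqr. reflexivity. Qed.

Let denom_pos : 0 < u + s ^ 2 /\ 0 < u + s * t /\ 0 < u + t ^ 2.
Proof. pose proof s_pos. pose proof s_lt_t. pose proof u_pos. repeat split; nra. Qed.

Lemma cen_ray : cen a b = (RtoC (/ (u + t ^ 2)) * alpha)%C.
Proof.
  unfold cen. rewrite two_sub_conj_cross.
  replace (2 - 2 * Re (a * Cconj b)) with (u + t ^ 2)
    by (unfold u, t; rewrite Cmod_one_sub_conj_mul_sqr; ring).
  apply Cdiv_RtoC. lra.
Qed.

Lemma m_ab_ray : m_ab a b = (RtoC (/ (u + s * t)) * alpha)%C.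
Proof. apply Cdiv_RtoC. lra. Qed.

Lemma pt_p_ray : pt_p a b = (RtoC (/ (u + s ^ 2)) * alpha)%C.
Proof.
  unfold pt_p. replace (2 - Cmod a ^ 2 - Cmod b ^ 2) with (u + s ^ 2)
    by (unfold u; rewrite s_sqr; ring).
  apply Cdiv_RtoC. lra.
Qed.

Lemma sinh2_half_rho_ray (c1 c2 : R) :
  sinh2_half_rho (RtoC c1 * alpha) (RtoC c2 * alpha) =
  (c1 - c2) ^ 2 * (u ^ 2 - s ^ 2 * t ^ 2)
  / ((1 - c1 ^ 2 * (u ^ 2 - s ^ 2 * t ^ 2)) * (1 - c2 ^ 2 * (u ^ 2 - s ^ 2 * t ^ 2))).
Proof.
  unfold sinh2_half_rho.
  rewrite Cmod_scal_sub_scal_sqr, !Cmod_scal_sqr, Cmod_alpha_sqr_st. reflexivity.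
Qed.

Lemma sinh2_half_rho_cen_m_p :
  sinh2_half_rho (cen a b) (m_ab a b) = sinh2_half_rho (m_ab a b) (pt_p a b).
Proof.
  rewrite cen_ray, m_ab_ray, pt_p_ray, !sinh2_half_rho_ray.
  pose proof s_pos as Hs. pose proof s_lt_t. pose proof u_pos.
  assert (HK : 0 < 2 * u + s ^ 2 + t ^ 2) by nra.
  assert (0 < s ^ 2 * (2 * u + s ^ 2 + t ^ 2)) by (apply Rmult_lt_0_compat; nra).
  assert (0 < t ^ 2 * (2 * u + s ^ 2 + t ^ 2)) by (apply Rmult_lt_0_compat; nra).
  assert (0 < 2 * s * t * (u + s * t)) by (apply Rmult_lt_0_compat; nra).
  field. repeat split; nra.
Qed.

Lemma Cmod_cen_sub_a_sqr :
  Cmod (cen a b - a) ^ 2 = t ^ 2 * (t ^ 2 - s ^ 2) / (u + t ^ 2) ^ 2.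
Proof.
  assert (Hr : 2 - 2 * Re (a * Cconj b) = u + t ^ 2)
    by (unfold u, t; rewrite Cmod_one_sub_conj_mul_sqr; ring).
  assert (E : (cen a b - a = RtoC (/ (u + t ^ 2)) * (alpha - RtoC (u + t ^ 2) * a))%C).
  { assert (Hc : (RtoC (/ (u + t ^ 2)) * RtoC (u + t ^ 2) = 1)%C)
      by (rewrite <- RtoC_mult, Rinv_l by lra; reflexivity).
    rewrite cen_ray, <- (Cmult_1_l a) at 1. rewrite <- Hc. ring. }
  rewrite E, Cmod_scal_sqr. unfold alpha. rewrite <- Hr, Cmod_alpha_sub_sqr, Hr.
  rewrite <- Cmod_one_sub_conj_mul_sqr, <- Cmod_sub_sqr. fold t.
  rewrite <- t_sqr_sub_s_sqr. field. lra.
Qed.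

Lemma one_sub_Cmod_m_ab_sqr : 1 - Cmod (m_ab a b) ^ 2 = 2 * s * t / (u + s * t).
Proof. rewrite m_ab_ray, Cmod_scal_sqr, Cmod_alpha_sqr_st. field. lra. Qed.

Lemma sinh2_half_rho_a_b : sinh2_half_rho a b = (t ^ 2 - s ^ 2) / s ^ 2.
Proof. unfold sinh2_half_rho. rewrite t_sqr_sub_s_sqr, s_sqr. reflexivity. Qed.

Lemma circle_level_set z :
  Cmod (m_ab a b - z) ^ 2 - t * (t - s) / (u + s * t) * (1 - Cmod z ^ 2) =
  (u + t ^ 2) / (u + s * t) * (Cmod (z - cen a b) ^ 2 - Cmod (cen a b - a) ^ 2).
Proof.
  rewrite Cmod_cen_sub_a_sqr, m_ab_ray, cen_ray.
  rewrite Cmod_scal_sub_sqr, Cmod_sub_scal_sqr, Cmod_alpha_sqr_st.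
  field. lra.
Qed.

Lemma Cmod_sub_cen_lt_iff z :
  Cmod (z - cen a b) < Cmod (cen a b - a) <->
  in_disk z /\ rho (m_ab a b) z < rho a b / 2.
Proof.
  pose proof s_pos. pose proof s_lt_t. pose proof u_pos.
  pose proof (circle_level_set z) as Hlevel.
  set (k := t * (t - s) / (u + s * t)) in Hlevel.
  assert (Hk : 0 < k) by (apply Rdiv_lt_0_compat; nra).
  assert (Hratio : 0 < (u + t ^ 2) / (u + s * t)) by (apply Rdiv_lt_0_compat; lra).
  assert (Hm : 0 < 1 - Cmod (m_ab a b) ^ 2).
  { rewrite one_sub_Cmod_m_ab_sqr. apply Rdiv_lt_0_compat; nra. }
  assert (Hm_disk : in_disk (m_ab a b)) by (apply in_disk_iff; lra).
  assert (Hcosh : sqrt (1 + sinh2_half_rho a b) = t / s).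
  { rewrite sinh2_half_rho_a_b. replace (1 + (t ^ 2 - s ^ 2) / s ^ 2) with ((t / s) ^ 2)
      by (field; lra).
    apply sqrt_pow2. apply Rdiv_le_0_compat; lra. }
  assert (Hrho : in_disk z ->
    rho (m_ab a b) z < rho a b / 2 <-> Cmod (m_ab a b - z) ^ 2 < k * (1 - Cmod z ^ 2)).
  { intros Hz. pose proof (proj1 (in_disk_iff z) Hz).
    rewrite rho_lt_half_rho_iff, Hcosh by assumption.
    unfold sinh2_half_rho. rewrite one_add_twice_div_lt_iff by nra.
    rewrite one_sub_Cmod_m_ab_sqr.
    replace ((t - s) * (2 * s * t / (u + s * t) * (1 - Cmod z ^ 2)))
      with (2 * s * (k * (1 - Cmod z ^ 2))) by (unfold k; field; lra).
    split; intros; nra. }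
  pose proof (pow2_ge_0 (Cmod (m_ab a b - z))).
  rewrite lt_iff_pow2_lt by apply Cmod_ge_0.
  split.
  - intros Hlt.
    assert (Hz : in_disk z) by (apply in_disk_iff; nra).
    split; [exact Hz | apply Hrho; [exact Hz | nra]].
  - intros [Hz Hlt]. apply Hrho in Hlt; [nra | exact Hz].
Qed.

End Configuration.

Theorem lemma2p15 (a b : C) :
  in_disk a -> in_disk b -> a <> 0%C -> b <> 0%C -> a <> b ->
  Cmod a <> Cmod b -> on_orthogonal_circle a b ->
  rho (cen a b) (m_ab a b) = rho (m_ab a b) (pt_p a b) /\
  (forall z : C,
     Cmod (z - cen a b)%C < Cmod (cen a b - a)%C <->
     (in_disk z /\ rho (m_ab a b) z < rho a b / 2)).
Proof.
  intros Ha Hb _ _ Hab _ _. split.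
  - rewrite !rho_sinh2_half, sinh2_half_rho_cen_m_p by assumption. reflexivity.
  - intros z. apply Cmod_sub_cen_lt_iff; assumption.
Qed.
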